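(* Let $\mathcal D$ be a continuous distribution on $\mathbb{R}$ with density $f$ and CDF $F$ whose support is unbounded in the direction of $+\infty$, with hazard rate $h_{\mathcal D}(x)=\frac{f(x)}{1-F(x)}$, and let $\tilde\Phi(G)=\mathbb{E}_{Z_1,\dots,Z_N\overset{iid}{\sim}\mathcal D}\max_i\{G_i+Z_i\}$. Then in each round $t$ of GBPA$(\tilde\Phi)$ with loss vector $g_t\in[-1,0]^N$, the divergence penalty satisfies \[\mathbb{E}_{i_t}\big[D_{\tilde\Phi}(\hat G_t,\hat G_{t-1})\,\big|\,\hat G_{t-1}\big]\le N\,\sup_x h_{\mathcal D}(x).\]
   Context: Algorithm GBPA$(\tilde\Phi)$: set $\hat G_0=0$; for $t=1,\dots,T$: sample arm $i_t$ according to $p_t=\nabla\tilde\Phi(\hat G_{t-1})$ (the $i$-th entry is the probability that $i=\arg\max_j\{G_j+Z_j\}$ at $G=\hat G_{t-1}$); incur and observe only $g_{t,i_t}$; set $\hat G_t=\hat G_{t-1}+\frac{g_{t,i_t}}{p_{t,i_t}}e_{i_t}$, where $e_i$ is the $i$-th standard basis vector. $D_{\tilde\Phi}(x,y)=\tilde\Phi(x)-\tilde\Phi(y)-\langle\nabla\tilde\Phi(y),x-y\rangle$ is the Bregman divergence. *)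

From HB Require Import structures.
From mathcomp Require Import all_boot all_order all_algebra.
From mathcomp Require Import all_classical all_reals all_analysis.
Set Implicit Arguments. Unset Strict Implicit. Unset Printing Implicit Defensive.
Import Order.TTheory GRing.Theory Num.Theory.
Import numFieldNormedType.Exports.
Local Open Scope classical_set_scope.
Local Open Scope ring_scope.

Section GBPA.
Context {R : realType} {d : measure_display} {T : measurableType d}.

(* Mutual independence of the finite family Z_0,...,Z_{N-1}: product rule for
   every family of Borel sets (taking B i = setT gives every subfamily). *)
Definition mutually_independent (P : probability T R) (N : nat)
  (Z : 'I_N -> T -> R) : Prop :=
  forall B : 'I_N -> set R, (forall i, measurable (B i)) ->
    P (\bigcap_(i in [set: 'I_N]) (Z i @^-1` B i)) =
    (\prod_(i < N) P (Z i @^-1` B i))%E.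

Definition has_density (P : probability T R) (X : T -> R) (f : R -> R) : Prop :=
  forall A : set R, measurable A ->
    P (X @^-1` A) = (\int[lebesgue_measure]_(x in A) (f x)%:E)%E.

Definition cdf (f : R -> R) (x : R) : R :=
  Rintegral lebesgue_measure `]-oo, x] f.
Definition hazard (f : R -> R) (x : R) : R := f x / (1 - cdf f x).

Definition maxGZ (N : nat) (Z : 'I_N -> T -> R) (G : 'I_N -> R) (w : T) : \bar R :=
  \big[maxe/-oo%E]_(i < N) ((G i + Z i w)%:E).

Definition Phi (P : probability T R) (N : nat) (Z : 'I_N -> T -> R)
  (G : 'I_N -> R) : R :=
  fine (\int[P]_w maxGZ Z G w)%E.

(* grad Phi~(G)_i = probability that i = argmax_j {G_j + Z_j} *)
Definition gradPhi (P : probability T R) (N : nat) (Z : 'I_N -> T -> R)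
  (G : 'I_N -> R) (i : 'I_N) : R :=
  fine (P [set w | forall j, G j + Z j w <= G i + Z i w]).

Definition bregman (P : probability T R) (N : nat) (Z : 'I_N -> T -> R)
  (x y : 'I_N -> R) : R :=
  Phi P Z x - Phi P Z y - \sum_(j < N) gradPhi P Z y j * (x j - y j).

Definition gbpa_update (N : nat) (G g p : 'I_N -> R) (i : 'I_N) : 'I_N -> R :=
  fun j => G j + (if j == i then g i / p i else 0).

End GBPA.

From Pilot Require Import Defs.
From HB Require Import structures.
From mathcomp Require Import all_boot all_order all_algebra.
From mathcomp Require Import all_classical all_reals all_analysis.
From mathcomp Require Import measurable_realfun.
From mathcomp Require Import lra ring.
Import Order.TTheory GRing.Theory Num.Theory.
Import numFieldNormedType.Exports.
Local Open Scope classical_set_scope.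
Local Open Scope ring_scope.

Set Implicit Arguments.
Unset Strict Implicit.
Unset Printing Implicit Defensive.

(* Fix an arm i with p_i > 0 and put u = - g_i / p_i >= 0.  Lowering G_i by u
   never raises max_j (G_j + Z_j), and it lowers it by the full u on the event
   "i wins" unless some other arm is within u of the winner ("i wins narrowly").
   Hence D(Ghat_t, Ghat_(t-1)) <= u P(i wins narrowly).  Conditioning on
   M = max_(j <> i) (G_j + Z_j), which is independent of Z_i, "i wins" asks
   Z_i >= M - G_i and "i wins narrowly" asks Z_i in [M - G_i, M - G_i + u); as
   f <= h (1 - F), the latter has probability at most h u times the former,
   i.e. h u p_i.  So p_i D <= h (u p_i)^2 = h g_i^2 <= h, and summing over the
   N arms gives the bound. *)

Section density_mass.
Context {R : realType}.
Variable f : R -> R.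
Hypotheses (f_meas : measurable_fun setT f) (f_ge0 : forall x, 0 <= f x)
  (f_tot : (\int[lebesgue_measure]_(y in setT) (f y)%:E = 1)%E)
  (f_tail : forall M : R,
     (0 < \int[lebesgue_measure]_(y in `]M, +oo[) (f y)%:E)%E).

Definition mass (A : set R) : \bar R :=
  (\int[lebesgue_measure]_(y in A) (f y)%:E)%E.

Let mEf (D : set R) : measurable_fun D (EFin \o f).
Proof. exact/measurable_funTS/measurable_EFinP. Qed.

Let f_ge0E x : (0 <= (f x)%:E)%E.
Proof. by rewrite lee_fin. Qed.

Lemma mass_ge0 A : measurable A -> (0 <= mass A)%E.
Proof. by move=> mA; apply: integral_ge0 => y _; exact: f_ge0E. Qed.

Lemma mass_fin_num A : measurable A -> mass A \is a fin_num.
Proof.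
move=> mA; rewrite ge0_fin_numE ?mass_ge0//; apply: le_lt_trans (ltry 1).
by rewrite -f_tot; apply: ge0_subset_integral => //; exact: mEf.
Qed.

Lemma survival_mass x : ((1 - Defs.cdf f x)%:E = mass `]x, +oo[)%E.
Proof.
have mass_split : (mass `]-oo, x] + mass `]x, +oo[ = 1)%E.
  rewrite -f_tot /mass -ge0_integral_setU//; first by rewrite -setCitvl setUv.
  - exact: mEf.
  - by rewrite -setCitvl; exact/disj_setPCl.
rewrite /Defs.cdf /Rintegral EFinB fineK ?mass_fin_num// -mass_split.
by rewrite addeAC subee ?add0e ?mass_fin_num.
Qed.

Lemma survival_gt0 x : 0 < 1 - Defs.cdf f x.
Proof. by rewrite -lte_fin survival_mass; exact: f_tail. Qed.

Section hazard_bound.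
Variable h : R.
Hypothesis hazard_le : forall x, hazard f x <= h.

Lemma hazard_bound_ge0 : 0 <= h.
Proof.
apply: le_trans (hazard_le 0); apply: divr_ge0 => //.
exact/ltW/survival_gt0.
Qed.

Lemma density_le_hazard_survival x : f x <= h * (1 - Defs.cdf f x).
Proof. by rewrite -ler_pdivrMr ?survival_gt0//; exact: hazard_le. Qed.

Lemma mass_window_le (c u : R) : 0 <= u ->
  (mass `[c, (c + u)%R[ <= (h * u)%:E * mass `[c, +oo[)%E.
Proof.
move=> u0; pose K := (h%:E * mass `[c, +oo[)%E.
have f_le_K z : z \in `[c, c + u[ -> ((f z)%:E <= K)%E.
  rewrite in_itv /= => /andP[cz _].
  apply: le_trans (_ : (h * (1 - Defs.cdf f z))%:E <= K)%E.
    by rewrite lee_fin density_le_hazard_survival.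
  rewrite EFinM survival_mass lee_wpmul2l ?lee_fin ?hazard_bound_ge0//.
  apply: ge0_subset_integral => //; first exact: mEf.
  by move=> y /=; rewrite !in_itv /= !andbT => /ltW; exact: le_trans.
have window_length : (lebesgue_measure `[c, (c + u)%R[%classic = u%:E)%E.
  rewrite lebesgue_measure_itv /= lte_fin ltrDl.
  case: ltP => [_|u_le0]; first by rewrite -EFinB addrAC subrr add0r.
  by have -> : u = 0 by apply/eqP; rewrite eq_le u0 u_le0.
apply: (@le_trans _ _
  (\int[lebesgue_measure]_(y in `[c, (c + u)%R[) cst K y)%E).
  by apply: ge0_le_integral => //; exact: mEf.
rewrite integral_cst// [X in (K * X)%E](_ : _ = u%:E).
  by rewrite /K EFinM muleAC.
exact: window_length.
Qed.

End hazard_bound.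
End density_mass.

Section independent_pair.
Context {R : realType} {d : measure_display} {T : measurableType d}.
Variables (P : probability T R) (X Y : {mfun T >-> R}).
Hypothesis indep_lt : forall (m : R) (B : set R), measurable B ->
  P (X @^-1` `]-oo, m[ `&` Y @^-1` B) =
  (P (X @^-1` `]-oo, m[) * P (Y @^-1` B))%E.

Let measurable_preimageI (A B : set R) : measurable A -> measurable B ->
  measurable (X @^-1` A `&` Y @^-1` B).
Proof. by move=> mA mB; apply: measurableI; exact: measurable_funPTI. Qed.

Section restricted_law.
Variables (B : set R) (mB : measurable B).

Definition restricted_law (A : set R) := P (X @^-1` A `&` Y @^-1` B).

Let restricted_law0 : restricted_law set0 = 0%E.
Proof. by rewrite /restricted_law preimage_set0 set0I measure0. Qed.

Let restricted_law_ge0 A : (0 <= restricted_law A)%E.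
Proof. exact: measure_ge0. Qed.

Let restricted_law_sigma_additive : semi_sigma_additive restricted_law.
Proof.
move=> F mF tF mUF; rewrite /restricted_law preimage_bigcup setI_bigcupl.
apply: measure_semi_sigma_additive => [n||]; first exact: measurable_preimageI.
- apply/trivIsetP => a b _ _ ab; rewrite setIACA -preimage_setI.
  by move/trivIsetP: tF => /(_ _ _ I I ab) ->; rewrite preimage_set0 set0I.
- by rewrite -setI_bigcupl -preimage_bigcup; exact: measurable_preimageI.
Qed.

HB.instance Definition _ := isMeasure.Build _ _ _ restricted_law
  restricted_law0 restricted_law_ge0 restricted_law_sigma_additive.

Let prob_YB : {nonneg R} := NngNum (fine_ge0 (measure_ge0 P (Y @^-1` B))).

Let scaled_lawE A :
  mscale prob_YB (distribution P X) A = (P (X @^-1` A) * P (Y @^-1` B))%E.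
Proof.
rewrite [RHS]muleC.
transitivity ((fine (P (Y @^-1` B)))%:E * P (X @^-1` A))%E => //.
by rewrite fineK// fin_num_measure//; exact: measurable_funPTI.
Qed.

(* Both sides are finite measures in A agreeing on the pi-system of rays
   ]-oo, m[, which generates the Borel sets. *)
Lemma indep_preimage A : measurable A ->
  P (X @^-1` A `&` Y @^-1` B) = (P (X @^-1` A) * P (Y @^-1` B))%E.
Proof.
move=> mA; rewrite -scaled_lawE; apply: (@measure_unique _ _ _
    (@RGenInftyO.G R) (fun n => `]-oo, n%:R[%classic) _ _ _ _
    restricted_law) => //.
- exact: RGenInftyO.measurableE.
- move=> _ _ [x ->] [y ->]; exists (Num.min x y).
  rewrite predeqE => z /=; rewrite !in_itv /= lt_min.
  by split=> [[-> ->]|/andP].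
- by move=> n; exists n%:R.
- rewrite predeqE => z; split => // _; exists (Num.trunc `|z|).+1 => //=.
  by rewrite in_itv /= (le_lt_trans (ler_norm z) (truncnS_gt _)).
- by move=> _ [x ->]; exact: eq_trans (indep_lt x mB) (esym (scaled_lawE _)).
- move=> k; apply: (le_lt_trans (probability_le1 _ _)); last exact: ltry.
  exact: measurable_preimageI.
Qed.

End restricted_law.

Definition pairXY (w : T) : R * R := (X w, Y w).

Let measurable_pairXY : measurable_fun setT pairXY.
Proof. by apply: measurable_fun_pair; exact: measurable_funPT. Qed.

HB.instance Definition _ :=
  isMeasurableFun.Build _ _ _ _ pairXY measurable_pairXY.

Lemma joint_law_indep (S : set (R * R)) : measurable S ->
  P ((fun w => (X w, Y w)) @^-1` S) =
  ((distribution P X \x distribution P Y) S)%E.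
Proof.
move=> mS; rewrite (product_measure_unique (m' := distribution P pairXY)) //.
by move=> A B mA mB; exact: indep_preimage.
Qed.

End independent_pair.

Section events.
Context {R : realType} {T : Type} {N : nat}.
Variables (Z : 'I_N -> T -> R) (G : 'I_N -> R) (i : 'I_N).

Definition win_event := [set w | forall j, G j + Z j w <= G i + Z i w].

Definition narrow_win_event (u : R) := [set w | win_event w /\
  exists2 j, j != i & G i + Z i w - u < G j + Z j w].

Lemma win_event_single_arm : ~ (exists j, j != i) -> win_event = setT.
Proof.
move=> single; apply/seteqP; split => // w _ j.
by have [->//|ji] := eqVneq j i; case: single; exists j.
Qed.

Lemma narrow_win_event_single_arm u :
  ~ (exists j, j != i) -> narrow_win_event u = set0.
Proof.
move=> single; apply/seteqP; split => // w [_ [j ji _]].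
by case: single; exists j.
Qed.

End events.

Section max_others.
Context {R : realType} {d : measure_display} {T : measurableType d}.
Variables (P : probability T R) (N : nat) (Z : 'I_N -> T -> R).
Hypotheses (Zmeas : forall i, measurable_fun setT (Z i))
  (Zindep : mutually_independent P Z).
Variables (G : 'I_N -> R) (i j0 : 'I_N).
Hypothesis j0i : j0 != i.

(* j0 only seeds the fold; it is itself one of the maximised arms. *)
Definition max_others (w : T) : R :=
  \big[Num.max/(G j0 + Z j0 w)]_(j | j != i) (G j + Z j w).

Lemma max_others_le w m :
  max_others w <= m <-> (forall j, j != i -> G j + Z j w <= m).
Proof.
split; first by move/bigmax_leP => [].
by move=> le_m; apply/bigmax_leP; split; [exact: le_m|exact: le_m].
Qed.

Lemma max_others_lt w m :
  max_others w < m <-> (forall j, j != i -> G j + Z j w < m).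
Proof.
split; first by move/bigmax_ltP => [].
by move=> lt_m; apply/bigmax_ltP; split; [exact: lt_m|exact: lt_m].
Qed.

Let measurable_arm j : measurable_fun setT (fun w => G j + Z j w).
Proof. exact/measurable_funD/Zmeas. Qed.

Lemma measurable_max_others : measurable_fun setT max_others.
Proof.
rewrite /max_others; elim: (index_enum _) => [|a r IH].
  by under eq_fun do rewrite big_nil; exact: measurable_arm.
under eq_fun do rewrite big_cons.
by case: (a != i) => //; exact: measurable_maxr.
Qed.

Definition Zi := Z i.

HB.instance Definition _ := isMeasurableFun.Build _ _ _ _ Zi (Zmeas i).
HB.instance Definition _ :=
  isMeasurableFun.Build _ _ _ _ max_others measurable_max_others.

Lemma indep_max_others_lt (m : R) (B : set R) : measurable B ->
  P (max_others @^-1` `]-oo, m[ `&` Zi @^-1` B) =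
  (P (max_others @^-1` `]-oo, m[) * P (Zi @^-1` B))%E.
Proof.
suff prodE B' : measurable B' ->
    P (max_others @^-1` `]-oo, m[ `&` Zi @^-1` B') =
    (P (Zi @^-1` B') *
     \prod_(j < N | j != i) P (Z j @^-1` `]-oo, (m - G j)%R[%classic))%E.
  move=> mB; rewrite prodE// muleC; congr (_ * _)%E.
  have := prodE setT measurableT.
  by rewrite preimage_setT setIT probability_setT mul1e => ->.
move=> mB'; pose Bs j := if j == i then B' else `]-oo, m - G j[%classic.
have mBs j : measurable (Bs j) by rewrite /Bs; case: ifP.
have := Zindep mBs; rewrite (bigD1 i) //= /Bs eqxx.
have -> : \bigcap_(j in [set: 'I_N]) Z j @^-1` Bs j =
    max_others @^-1` `]-oo, m[ `&` Zi @^-1` B'.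
  rewrite predeqE => w; split => [inB|[]].
    split; last by have := inB i I; rewrite /Bs eqxx.
    rewrite /= in_itv /=; apply/max_others_lt => j ji.
    by have := inB j I; rewrite /Bs (negbTE ji) /= in_itv /= ltrBrDl.
  rewrite /= in_itv /= => /max_others_lt lt_m ZiB j _.
  rewrite /Bs; case: ifPn => [/eqP -> //|ji].
  by rewrite /= in_itv /= ltrBrDl lt_m.
move=> ->; congr (_ * _)%E; apply: eq_bigr => j ji.
by rewrite /Bs (negbTE ji).
Qed.

Lemma measurable_pair_preimage S : measurable S ->
  measurable ((fun w => (max_others w, Zi w)) @^-1` S).
Proof.
move=> mS; rewrite -[X in measurable X]setTI.
exact: (measurable_fun_pair measurable_max_others (Zmeas i)).
Qed.

Definition win_region := [set q : R * R | q.1 <= G i + q.2].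

Definition narrow_win_region (u : R) :=
  [set q : R * R | q.1 <= G i + q.2 /\ G i + q.2 - u < q.1].

Lemma win_eventE :
  win_event Z G i = (fun w => (max_others w, Zi w)) @^-1` win_region.
Proof.
rewrite predeqE => w; split => [win|/= /max_others_le win j].
  by apply/max_others_le => j _; exact: win.
by have [->//|] := eqVneq j i; exact: win.
Qed.

Lemma narrow_win_eventE u : narrow_win_event Z G i u =
  (fun w => (max_others w, Zi w)) @^-1` narrow_win_region u.
Proof.
rewrite predeqE => w; rewrite /narrow_win_event win_eventE /= /Zi.
split=> -[win close]; split => //.
  rewrite ltNge; apply/negP => /max_others_le far.
  by case: close => j ji; rewrite ltNge far.
apply: contrapT => far; move: close; apply/negP; rewrite -leNgt.
apply/max_others_le => j ji; rewrite leNgt; apply/negP => close.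
by apply: far; exists j.
Qed.

Lemma measurable_win_region : measurable win_region.
Proof.
have := @measurable_fun_ler _ _ _ setT fst (fun q : R * R => G i + q.2)
  measurable_fst (measurable_funD (measurable_cst _) measurable_snd)
  measurableT [set true] I.
by rewrite setTI.
Qed.

Lemma measurable_narrow_win_region u : measurable (narrow_win_region u).
Proof.
apply: measurableI measurable_win_region _.
have := @measurable_fun_ltr _ _ _ setT (fun q : R * R => G i + q.2 - u) fst
  (measurable_funB (measurable_funD (measurable_cst _) measurable_snd)
    (measurable_cst _)) measurable_fst measurableT [set true] I.
by rewrite setTI.
Qed.

Lemma xsection_win_region m :
  xsection win_region m = `[m - G i, +oo[%classic.
Proof.
rewrite /xsection predeqE => z /=.
by rewrite in_itv /= andbT inE /win_region /= lerBlDl.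
Qed.

Lemma xsection_narrow_win_region u m :
  xsection (narrow_win_region u) m = `[m - G i, m - G i + u[%classic.
Proof.
rewrite /xsection predeqE => z /=; rewrite in_itv /= inE /narrow_win_region /=.
rewrite lerBlDl; split => [[le_z lt_z]|/andP[le_z lt_z]].
  by apply/andP; split => //; lra.
by split => //; lra.
Qed.

Variables (f : R -> R) (h u : R).
Hypotheses (f_meas : measurable_fun setT f) (f_ge0 : forall x, 0 <= f x)
  (f_tot : (\int[lebesgue_measure]_(y in setT) (f y)%:E = 1)%E)
  (f_tail : forall M : R,
     (0 < \int[lebesgue_measure]_(y in `]M, +oo[) (f y)%:E)%E)
  (Zdens : has_density P (Z i) f)
  (hazard_le : forall x, hazard f x <= h) (u0 : 0 <= u).

Lemma narrow_win_le_others :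
  (P (narrow_win_event Z G i u) <= (h * u)%:E * P (win_event Z G i))%E.
Proof.
have indep := joint_law_indep indep_max_others_lt.
rewrite narrow_win_eventE win_eventE !indep;
  [|exact: measurable_win_region|exact: measurable_narrow_win_region].
have h_ge0 := hazard_bound_ge0 f_meas f_ge0 f_tot f_tail hazard_le.
have hu0 : (0 <= (h * u)%:E)%E by rewrite lee_fin mulr_ge0.
have window m : (distribution P Zi (xsection (narrow_win_region u) m) <=
    (h * u)%:E * distribution P Zi (xsection win_region m))%E.
  rewrite xsection_narrow_win_region xsection_win_region.
  rewrite /distribution /pushforward !Zdens//.
  exact: (mass_window_le f_meas f_ge0 f_tot f_tail hazard_le).
have m_win := measurable_fun_xsection (distribution P Zi) measurable_win_region.
have m_narrow :=
  measurable_fun_xsection (distribution P Zi) (measurable_narrow_win_region u).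
rewrite /product_measure1 -ge0_integralZl//.
apply: ge0_le_integral => //; first exact: measurable_funeM.
by move=> m _; exact: window.
Qed.

End max_others.

Section win_probabilities.
Context {R : realType} {d : measure_display} {T : measurableType d}.
Variables (P : probability T R) (N : nat) (Z : 'I_N -> T -> R).
Hypotheses (Zmeas : forall i, measurable_fun setT (Z i))
  (Zindep : mutually_independent P Z).
Variables (G : 'I_N -> R) (i : 'I_N).

Lemma measurable_win_event : measurable (win_event Z G i).
Proof.
have [[j0 j0i]|single] := pselect (exists j, j != i).
  rewrite (win_eventE Z G j0i).
  by apply: (measurable_pair_preimage Zmeas); exact: measurable_win_region.
by rewrite win_event_single_arm.
Qed.

Lemma measurable_narrow_win_event u : measurable (narrow_win_event Z G i u).
Proof.
have [[j0 j0i]|single] := pselect (exists j, j != i).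
  rewrite (narrow_win_eventE Z G j0i).
  apply: (measurable_pair_preimage Zmeas).
  exact: measurable_narrow_win_region.
by rewrite narrow_win_event_single_arm.
Qed.

Variables (f : R -> R) (h u : R).
Hypotheses (f_meas : measurable_fun setT f) (f_ge0 : forall x, 0 <= f x)
  (f_tot : (\int[lebesgue_measure]_(y in setT) (f y)%:E = 1)%E)
  (f_tail : forall M : R,
     (0 < \int[lebesgue_measure]_(y in `]M, +oo[) (f y)%:E)%E)
  (Zdens : has_density P (Z i) f)
  (hazard_le : forall x, hazard f x <= h) (u0 : 0 <= u).

Lemma narrow_win_le :
  fine (P (narrow_win_event Z G i u)) <= h * u * gradPhi P Z G i.
Proof.
have win_fin : P (win_event Z G i) \is a fin_num.
  exact/fin_num_measure/measurable_win_event.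
have narrow_fin : P (narrow_win_event Z G i u) \is a fin_num.
  exact/fin_num_measure/measurable_narrow_win_event.
rewrite -lee_fin EFinM /gradPhi !fineK//.
have [[j0 j0i]|single] := pselect (exists j, j != i).
  exact: (narrow_win_le_others Zmeas Zindep G j0i f_meas f_ge0 f_tot f_tail).
have h_ge0 := hazard_bound_ge0 f_meas f_ge0 f_tot f_tail hazard_le.
by rewrite narrow_win_event_single_arm// measure0 mule_ge0// lee_fin mulr_ge0.
Qed.

End win_probabilities.

Definition shift_coord {V : zmodType} {N : nat} (G : 'I_N -> V) (i : 'I_N)
  (c : V) : 'I_N -> V :=
  fun j => G j + (if j == i then c else 0).

Section bregman_shift.
Context {R : realType} {d : measure_display} {T : measurableType d}.
Variables (P : probability T R) (N : nat) (Z : 'I_N -> T -> R).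
Hypotheses (Zmeas : forall i, measurable_fun setT (Z i))
  (Phi_finite : forall G : 'I_N -> R, P.-integrable setT (maxGZ Z G)).
Variables (G : 'I_N -> R) (i : 'I_N).

Lemma maxGZ_le (x y : 'I_N -> R) w : (forall j, x j <= y j) ->
  (maxGZ Z x w <= maxGZ Z y w)%E.
Proof. by move=> le_xy; apply: le_bigmax2 => j _; rewrite lee_fin lerD2r. Qed.

Lemma maxGZ_lower_coord u w : 0 <= u ->
  (maxGZ Z (shift_coord G i (- u)) w + (u * \1_(win_event Z G i) w)%:E <=
   maxGZ Z G w + (u * \1_(narrow_win_event Z G i u) w)%:E)%E.
Proof.
move=> u0; have lowered j : shift_coord G i (- u) j <= G j.
  by rewrite /shift_coord; case: ifP => _; rewrite ?addr0 // gerDl oppr_le0.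
rewrite !indicE.
have [win|not_win] := boolP (w \in win_event Z G i); last first.
  have -> : w \in narrow_win_event Z G i u = false.
    apply/negP => /set_mem [win _].
    by move/negP: not_win; apply; exact: mem_set.
  by rewrite !mulr0 !adde0; exact: maxGZ_le.
have [narrow|wide] := boolP (w \in narrow_win_event Z G i u).
  by rewrite leeD2r //; exact: maxGZ_le.
rewrite !mulr1 mulr0 adde0.
have drop : (maxGZ Z (shift_coord G i (- u)) w <= (G i + Z i w - u)%:E)%E.
  apply: bigmax_le => [|j _]; first exact: leNye.
  rewrite lee_fin /shift_coord; have [->|ji] := eqVneq j i; first lra.
  rewrite addr0 leNgt; apply/negP => close.
  by move/negP: wide; apply; apply: mem_set; split; [exact: set_mem|exists j].
apply: le_trans (leeD2r _ drop) _.
by rewrite -EFinD subrK; exact: (le_bigmax _ (fun k => (G k + Z k w)%:E) i).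
Qed.

Lemma Phi_lower_coord_le u : 0 <= u ->
  Phi P Z (shift_coord G i (- u)) - Phi P Z G <=
  u * (fine (P (narrow_win_event Z G i u)) - fine (P (win_event Z G i))).
Proof.
move=> u0; set G' := shift_coord G i (- u).
have mwin := measurable_win_event Zmeas G i.
have mnarrow := measurable_narrow_win_event Zmeas G i u.
have scaled_indic (E : set T) : measurable E ->
    P.-integrable setT (fun w => (u * \1_E w)%:E) /\
    (\int[P]_w (u * \1_E w)%:E = u%:E * P E)%E.
  move=> mE.
  have -> : (fun w => (u * \1_E w)%:E) = (fun w => u%:E * (\1_E w)%:E)%E.
    by apply/funext => w; rewrite EFinM.
  split; first by apply: integrableZl => //; exact: integrable_indic.
  by rewrite integralZl ?integral_indic ?setIT//; exact: integrable_indic.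
have [int_win int_winE] := scaled_indic _ mwin.
have [int_narrow int_narrowE] := scaled_indic _ mnarrow.
have ineq : (\int[P]_w (maxGZ Z G' w + (u * \1_(win_event Z G i) w)%:E) <=
    \int[P]_w (maxGZ Z G w + (u * \1_(narrow_win_event Z G i u) w)%:E))%E.
  apply: le_integral => //.
  - exact: integrableD (Phi_finite _) int_win.
  - exact: integrableD (Phi_finite _) int_narrow.
  - by move=> w _; exact: maxGZ_lower_coord.
rewrite (integralD measurableT (Phi_finite G') int_win) in ineq.
rewrite (integralD measurableT (Phi_finite G) int_narrow) in ineq.
have fin_int G'' : (\int[P]_w maxGZ Z G'' w)%E \is a fin_num.
  exact: integrable_fin_num (Phi_finite G'').
rewrite int_winE int_narrowE -(fineK (fin_int G')) -(fineK (fin_int G)) in ineq.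
rewrite -(fineK (fin_num_measure P _ mwin)) in ineq.
rewrite -(fineK (fin_num_measure P _ mnarrow)) in ineq.
move: ineq; rewrite -!EFinM -!EFinD lee_fin /Phi mulrBr; lra.
Qed.

Lemma bregman_shift_coord c : bregman P Z (shift_coord G i c) G =
  Phi P Z (shift_coord G i c) - Phi P Z G - gradPhi P Z G i * c.
Proof.
rewrite /bregman (bigD1 i) //= big1 ?addr0 => [|j ji].
  by rewrite /shift_coord eqxx (addrC (G i)) addrK.
by rewrite /shift_coord (negbTE ji) addr0 subrr mulr0.
Qed.

Lemma bregman_lower_coord_le u : 0 <= u ->
  bregman P Z (shift_coord G i (- u)) G <=
  u * fine (P (narrow_win_event Z G i u)).
Proof.
move=> u0; have := Phi_lower_coord_le u0.
by rewrite bregman_shift_coord /gradPhi -/(win_event Z G i); lra.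
Qed.

End bregman_shift.

Section bregman_hazard.
Context {R : realType} {d : measure_display} {T : measurableType d}.
Variables (P : probability T R) (N : nat) (Z : 'I_N -> T -> R) (f : R -> R)
  (h : R).
Hypotheses (Zmeas : forall i, measurable_fun setT (Z i))
  (Zindep : mutually_independent P Z)
  (Phi_finite : forall G : 'I_N -> R, P.-integrable setT (maxGZ Z G))
  (f_meas : measurable_fun setT f) (f_ge0 : forall x, 0 <= f x)
  (f_tot : (\int[lebesgue_measure]_(y in setT) (f y)%:E = 1)%E)
  (f_tail : forall M : R,
     (0 < \int[lebesgue_measure]_(y in `]M, +oo[) (f y)%:E)%E)
  (Zdens : forall i, has_density P (Z i) f)
  (hazard_le : forall x, hazard f x <= h).

Lemma gradPhi_mul_bregman_le (G : 'I_N -> R) (i : 'I_N) (gi : R) :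
  -1 <= gi <= 0 ->
  gradPhi P Z G i * bregman P Z (shift_coord G i (gi / gradPhi P Z G i)) G
    <= h.
Proof.
move=> /andP[gi_ge gi_le0]; set p := gradPhi P Z G i.
have h_ge0 := hazard_bound_ge0 f_meas f_ge0 f_tot f_tail hazard_le.
have p_ge0 : 0 <= p by exact/fine_ge0/measure_ge0.
have [->|p_neq0] := eqVneq p 0; first by rewrite mul0r.
have p_gt0 : 0 < p by rewrite lt0r p_neq0.
pose u := - (gi / p).
have u_ge0 : 0 <= u by rewrite oppr_ge0 mulr_le0_ge0 // invr_ge0.
have up : u * p = - gi by rewrite mulNr divfK.
rewrite -[gi / p]opprK -/u.
have breg := bregman_lower_coord_le Zmeas Phi_finite G i u_ge0.
have narrow := narrow_win_le Zmeas Zindep G f_meas f_ge0 f_tot f_tail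
  (Zdens i) hazard_le u_ge0.
apply: le_trans (ler_wpM2l p_ge0 breg) _.
apply: le_trans (ler_wpM2l p_ge0 (ler_wpM2l u_ge0 narrow)) _.
have -> : p * (u * (h * u * p)) = h * (u * p) ^+ 2 by ring.
by rewrite up sqrrN ler_piMr//; nra.
Qed.

End bregman_hazard.

Theorem lemma2 (R : realType) (d : measure_display) (T : measurableType d)
  (P : probability T R) (N : nat) (Z : 'I_N -> T -> R) (f : R -> R)
  (Zmeas : forall i, measurable_fun setT (Z i))
  (Zindep : mutually_independent P Z)
  (f_meas : measurable_fun setT f)
  (f_ge0 : forall x, 0 <= f x)
  (Zdens : forall i, has_density P (Z i) f)
  (unbounded_support : forall M : R,
      (0 < \int[lebesgue_measure]_(y in `]M, +oo[) (f y)%:E)%E)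
  (Phi_finite : forall G : 'I_N -> R, P.-integrable setT (maxGZ Z G))
  (Ghat : 'I_N -> R) (g : 'I_N -> R)
  (g_range : forall i, -1 <= g i <= 0) :
  let p := gradPhi P Z Ghat in
  ((\sum_(i < N) p i * bregman P Z (gbpa_update Ghat g p i) Ghat)%:E
    <= (N%:R)%:E * ereal_sup (range (fun x => (hazard f x)%:E)))%E.
Proof.
cbv zeta; have [N0|N_gt0] := posnP N.
  rewrite big1 => [|j]; first by rewrite N0 mul0e.
  by move: (ltn_ord j); rewrite {2}N0.
have f_tot : (\int[lebesgue_measure]_(y in setT) (f y)%:E = 1)%E.
  rewrite -(Zdens (Ordinal N_gt0) _ measurableT).
  by rewrite preimage_setT probability_setT.
have sup_ub x :
    ((hazard f x)%:E <= ereal_sup (range (fun x => (hazard f x)%:E)))%E.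
  by apply: ereal_sup_ubound; exists x.
move: sup_ub; case: (ereal_sup _) => [h| |] sup_ub; first last.
- by have := sup_ub 0; rewrite leeNy_eq.
- by rewrite gt0_muley ?lte_fin ?ltr0n // leey.
have hazard_le x : hazard f x <= h by rewrite -lee_fin.
apply: (@le_trans _ _ (\sum_(i < N) h)%:E).
  rewrite lee_fin; apply: ler_sum => i _.
  exact: (gradPhi_mul_bregman_le Zmeas Zindep Phi_finite f_meas f_ge0 f_tot
    unbounded_support Zdens hazard_le Ghat i (g_range i)).
by rewrite sumr_const card_ord -EFinM mulr_natl.
Qed.
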